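(* Let $s\in(0,1)$ and let $F\in\mathcal M_s$ be an even function. Suppose that for some $\gamma>0$ one has $\int_\gamma F(x)x^{2k}=0$ for all $k\in\mathbb Z_{\ge0}$. Then $F=0$.
   Context: Fix $q\in(0,1)$. Notation: $(a;q)_\infty=\prod_{j\ge0}(1-aq^j)$, $e_q(x)=1/(x;q)_\infty$. For $\gamma>0$, $\int_\gamma f=(1-q)\sum_{k\in\mathbb Z}\sum_{\epsilon=\pm1}q^k\gamma f(\epsilon q^k\gamma)$ whenever absolutely convergent. For $s>0$, $\mathcal M_s$ is the set of functions $F(x)=f(x)e_{q^2}(-x^2)$ (holomorphic on $|\mathrm{Im}\,x|<1$) where $f(x)=\sum_{l\ge0}a_lx^l$ with $|a_l|\le Cs^lq^{l^2/2}$ for all $l$, for some $C>0$. *)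

From Stdlib Require Import Reals ZArith.
From Coquelicot Require Import Coquelicot.
Open Scope R_scope.

Fixpoint cpow (x : C) (n : nat) : C :=
  match n with O => RtoC 1 | S n => Cmult x (cpow x n) end.

Fixpoint qpoch_partial (a : C) (q : R) (n : nat) : C :=
  match n with
  | O => RtoC 1
  | S n => Cmult (qpoch_partial a q n) (Cminus (RtoC 1) (Cmult a (RtoC (q ^ n))))
  end.

(* [e_{q}(x) = v]  :  v = 1/(x;q)_oo, the infinite product being the limit
   of the partial products. *)
Definition is_eq (q : R) (x : C) (v : C) : Prop :=
  exists p : C,
    filterlim (qpoch_partial x q) eventually (locally p) /\ v = Cinv p.

(* Membership of F in M_s: F(x) = f(x) e_{q^2}(-x^2) on the strip |Im x| < 1,
   with f(x) = sum_l a_l x^l and |a_l| <= C s^l q^(l^2/2). *)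
Definition in_M (q s : R) (F : C -> C) : Prop :=
  exists (a : nat -> C) (Cst : R),
    0 < Cst /\
    (forall l : nat, Cmod (a l) <= Cst * s ^ l * Rpower q (INR l ^ 2 / 2)) /\
    forall x : C, Rabs (Im x) < 1 ->
      exists fx ex : C,
        is_series (fun l => Cmult (a l) (cpow x l)) fx /\
        is_eq (q ^ 2) (Copp (cpow x 2)) ex /\
        F x = Cmult fx ex.

(* The Jackson-type integral  int_gamma h = (1-q) sum_{k in Z} sum_{eps=+-1}
   q^k gamma h(eps q^k gamma), required to be absolutely convergent. *)
Definition jpt (q gamma : R) (k : Z) : R := powerRZ q k * gamma.

Definition jterm (q gamma : R) (h : R -> C) (k : Z) : C :=
  Cmult (RtoC ((1 - q) * jpt q gamma k))
        (Cplus (h (jpt q gamma k)) (h (- jpt q gamma k))).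

Definition jackson_abs_conv (q gamma : R) (h : R -> C) : Prop :=
  forall eps : R, (eps = 1 \/ eps = -1) ->
    ex_series (fun n : nat => jpt q gamma (Z.of_nat n) *
                              Cmod (h (eps * jpt q gamma (Z.of_nat n)))) /\
    ex_series (fun n : nat => jpt q gamma (- Z.of_nat (S n)) *
                              Cmod (h (eps * jpt q gamma (- Z.of_nat (S n))))).

Definition jackson_integral_is (q gamma : R) (h : R -> C) (v : C) : Prop :=
  jackson_abs_conv q gamma h /\
  is_series (fun n : nat => Cplus (jterm q gamma h (Z.of_nat n))
                                  (jterm q gamma h (- Z.of_nat (S n)))) v.

From Stdlib Require Import Reals ZArith Lra Lia.
From Coquelicot Require Import Coquelicot.
Open Scope R_scope.

(* Write [F = f e_{q^2}(-x^2)] with [f = sum a_l x^l].  On the real axis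
   [e_{q^2}(-t^2) = 1 / P t] with [P t = (-t^2; q^2)_oo], so the Jackson integral of [F x^(2k)]
   only sees the even part [g t = sum_j b_j t^(2j)] of [f] (made real by testing against a
   unimodular constant).  The hypothesis says that the weight [w t = t / P t] on the lattice
   [q^m gamma] annihilates [g t t^(2k)] for every [k].  Since [P t = (1 + t^2) P (q t)],
   multiplying by the partial products [(-t^2; q^2)_p] and shifting the lattice gives
   [sum_m w (t_m) g (t_(m-p)) = 0] for every [p]; expanding [g] and exchanging the sums,
   [sum_j b_j rho_j q^(-2pj) = 0] where the [rho_j] are the moments of [w].  These satisfy
   [rho_j q^(j^2) <= rho_0], so [b_j rho_j] decays like [q^(j^2)], and a Lagrange interpolation
   estimate shows that such a series vanishing at all the nodes [q^(-2p)] is zero.  Hence [f]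
   is odd, so [F] is odd; being even, [F = 0]. *)

(** * Series of reals *)

Lemma pow_le_pow_le_1 (r : R) (m n : nat) :
  0 <= r <= 1 -> (m <= n)%nat -> r ^ n <= r ^ m.
Proof.
  intros Hr Hmn. replace n with (m + (n - m))%nat by lia. rewrite pow_add.
  pose proof (pow_le r m (proj1 Hr)). pose proof (pow_incr r 1 (n - m) Hr) as H1.
  rewrite pow1 in H1. nra.
Qed.

Lemma exp_le_exp_of_le (x y : R) : x <= y -> exp x <= exp y.
Proof. intros [H | <-]; [left; apply exp_increasing |]; lra. Qed.

Lemma eq0_of_Rabs_le_geom (a c r : R) :
  0 <= r < 1 -> (forall n, Rabs a <= c * r ^ n) -> a = 0.
Proof.
  intros Hr Ha. apply Rabs_eq_0, Rle_antisym; [| apply Rabs_pos].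
  assert (Hlim : is_lim_seq (fun n => c * r ^ n) 0).
  { replace (Finite 0) with (Rbar_mult c 0) by (simpl; f_equal; ring).
    apply is_lim_seq_scal_l, is_lim_seq_geom. rewrite Rabs_pos_eq; lra. }
  apply (is_lim_seq_le (fun _ => Rabs a) (fun n => c * r ^ n) (Rabs a) 0 Ha);
    [apply is_lim_seq_const | exact Hlim].
Qed.

Lemma is_series_is_lim_seq (a : nat -> R) (l : R) :
  is_series a l <-> is_lim_seq (sum_n a) l.
Proof. split; intros H; exact H. Qed.

(* [is_series_ext] at type [R], so that the pointwise equations are goals [ring] recognises. *)
Lemma is_series_ext_R (a b : nat -> R) (l : R) :
  (forall n, a n = b n) -> is_series a l -> is_series b l.
Proof. apply is_series_ext. Qed.

Lemma is_lim_seq_Rabs_le_0 (v w : nat -> R) :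
  (forall n, Rabs (v n) <= w n) -> is_lim_seq w 0 -> is_lim_seq v 0.
Proof.
  intros Hvw Hw. apply (is_lim_seq_le_le (fun n => - w n) v w); [| | exact Hw].
  - intros n. apply Rabs_le_between, Hvw.
  - replace (Finite 0) with (Rbar_opp 0) by (simpl; f_equal; ring).
    apply -> is_lim_seq_opp. exact Hw.
Qed.

Lemma is_series_lincomb (a b u : nat -> R) (la lb alpha beta l : R) :
  is_series a la -> is_series b lb ->
  (forall n, u n = alpha * a n + beta * b n) -> l = alpha * la + beta * lb -> is_series u l.
Proof.
  intros Ha Hb Hu ->. apply (is_series_ext _ _ _ (fun n => eq_sym (Hu n))).
  exact (is_series_plus _ _ _ _ (is_series_scal _ _ _ Ha) (is_series_scal _ _ _ Hb)).
Qed.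

Lemma sum_n_eq_head (u : nat -> R) (n : nat) :
  (forall k, (1 <= k <= n)%nat -> u k = 0) -> sum_n u n = u 0%nat.
Proof.
  induction n as [| n IH]; intros Hu; [apply sum_O |].
  rewrite sum_Sn, IH by (intros k Hk; apply Hu; lia). rewrite (Hu (S n)) by lia.
  apply Rplus_0_r.
Qed.

Lemma is_series_drop_zeros (u : nat -> R) (m : nat) (l : R) :
  (forall k, (k < m)%nat -> u k = 0) -> is_series u l ->
  is_series (fun j => u (m + j)%nat) l.
Proof.
  intros Hu Hs. destruct m as [| m]; [exact Hs |].
  apply is_series_incr_n; [lia |].
  simpl pred. rewrite sum_n_eq_head by (intros k Hk; apply Hu; lia).
  rewrite (Hu 0%nat) by lia.
  match goal with |- is_series _ ?v => replace v with l by (unfold plus; simpl; ring) end.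
  exact Hs.
Qed.

Lemma ex_series_Rabs_le (a d : nat -> R) :
  (forall n, Rabs (a n) <= d n) -> ex_series d -> ex_series a.
Proof. intros H Hd. exact (@ex_series_le R_AbsRing R_CompleteNormedModule _ d H Hd). Qed.

Lemma ex_series_scal_geom (c r : R) : Rabs r < 1 -> ex_series (fun n => c * r ^ n).
Proof.
  intros Hr. exists (c * / (1 - r)). exact (is_series_scal c _ _ (is_series_geom r Hr)).
Qed.

Lemma Rabs_Series_le (a d : nat -> R) :
  (forall n, Rabs (a n) <= d n) -> ex_series d -> Rabs (Series a) <= Series d.
Proof.
  intros H Hd. eapply Rle_trans; [apply Series_Rabs |].
  - apply (ex_series_Rabs_le _ d); [intros n; rewrite Rabs_Rabsolu; apply H | exact Hd].
  - apply Series_le; [intros n; split; [apply Rabs_pos | apply H] | exact Hd].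
Qed.

Lemma Rabs_series_head_le (u : nat -> R) (n : nat) (c rho : R) :
  0 <= rho < 1 -> is_series u 0 ->
  (forall k, (1 <= k <= n)%nat -> u k = 0) ->
  (forall k, Rabs (u (S n + k)%nat) <= c * rho ^ k) ->
  Rabs (u 0%nat) <= c / (1 - rho).
Proof.
  intros Hrho Hs Hzero Htail.
  assert (Hgeom : is_series (fun k => c * rho ^ k) (c * / (1 - rho))).
  { exact (is_series_scal c _ _ (is_series_geom rho ltac:(rewrite Rabs_pos_eq; lra))). }
  assert (Hrest : is_series (fun k => u (S n + k)%nat) (- u 0%nat)).
  { apply is_series_incr_n; [lia |]. simpl pred. rewrite sum_n_eq_head by exact Hzero.
    match goal with |- is_series _ ?v => replace v with 0 by (unfold plus; simpl; ring) end.
    exact Hs. }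
  unfold Rdiv.
  rewrite <- Rabs_Ropp, <- (is_series_unique _ _ Hrest), <- (is_series_unique _ _ Hgeom).
  apply Rabs_Series_le; [exact Htail | eexists; exact Hgeom].
Qed.

Lemma Series_nonneg (a : nat -> R) : (forall n, 0 <= a n) -> ex_series a -> 0 <= Series a.
Proof.
  intros Ha Hex. replace 0 with (Series (fun n => 0 * a n)) by (rewrite Series_scal_l; ring).
  apply Series_le; [intros n; rewrite Rmult_0_l; split; [lra | apply Ha] | exact Hex].
Qed.

Lemma Series_tail (a : nat -> R) (N : nat) :
  ex_series a -> Series (fun k => a (S N + k)%nat) = Series a - sum_n a N.
Proof.
  intros H. rewrite (Series_incr_n a (S N)) by (auto; lia). simpl pred.
  rewrite sum_n_Reals. ring.
Qed.

Lemma ex_series_tail (a : nat -> R) (N : nat) :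
  ex_series a -> ex_series (fun k => a (S N + k)%nat).
Proof. apply ex_series_incr_n. Qed.

Lemma is_lim_seq_Series_tail (a : nat -> R) :
  ex_series a -> is_lim_seq (fun N => Series (fun k => a (S N + k)%nat)) 0.
Proof.
  intros H. apply (is_lim_seq_ext (fun N => Series a - sum_n a N));
    [intros N; symmetry; apply Series_tail, H |].
  replace (Finite 0) with (Finite (Series a - Series a)) by (f_equal; ring).
  apply is_lim_seq_minus'; [apply is_lim_seq_const |].
  apply is_series_is_lim_seq, Series_correct, H.
Qed.

Lemma is_lim_seq_sum_n_0 (f : nat -> nat -> R) (J : nat) :
  (forall j, is_lim_seq (fun N => f N j) 0) -> is_lim_seq (fun N => sum_n (f N) J) 0.
Proof.
  intros H. induction J as [| J IH].
  - apply (is_lim_seq_ext (fun N => f N 0%nat)); [intros N; symmetry; apply sum_O | apply H].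
  - apply (is_lim_seq_ext (fun N => sum_n (f N) J + f N (S J)));
      [intros N; rewrite sum_Sn; reflexivity |].
    replace (Finite 0) with (Finite (0 + 0)) by (f_equal; ring). apply is_lim_seq_plus'; auto.
Qed.

Lemma sum_n_nonneg (a : nat -> R) (N : nat) : (forall n, 0 <= a n) -> 0 <= sum_n a N.
Proof.
  intros H. induction N as [| N IH]; [rewrite sum_O; apply H |].
  rewrite sum_Sn. pose proof (H (S N)). unfold plus; simpl; lra.
Qed.

Lemma Series_tail_bounds (d : nat -> R) (N : nat) :
  (forall n, 0 <= d n) -> ex_series d -> 0 <= Series (fun k => d (S N + k)%nat) <= Series d.
Proof.
  intros Hd Hex. rewrite Series_tail by exact Hex.
  pose proof (Series_nonneg _ (fun k => Hd (S N + k)%nat) (ex_series_tail d N Hex)) as H.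
  rewrite Series_tail in H by exact Hex. pose proof (sum_n_nonneg d N Hd). lra.
Qed.

Lemma Rabs_Series_sub_sum_n_le (a d : nat -> R) (N : nat) :
  (forall n, Rabs (a n) <= d n) -> ex_series d ->
  Rabs (Series a - sum_n a N) <= Series (fun k => d (S N + k)%nat).
Proof.
  intros Had Hd. rewrite <- Series_tail by exact (ex_series_Rabs_le a d Had Hd).
  apply Rabs_Series_le; [intros k; apply Had | apply ex_series_tail, Hd].
Qed.

Lemma is_lim_seq_Series_dominated (f : nat -> nat -> R) (c : nat -> R) :
  (forall N j, 0 <= f N j <= c j) -> ex_series c ->
  (forall j, is_lim_seq (fun N => f N j) 0) ->
  is_lim_seq (fun N => Series (f N)) 0.
Proof.
  intros Hf Hc Hlim.
  assert (Hex : forall N, ex_series (f N)).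
  { intros N. apply (ex_series_Rabs_le _ c); [| exact Hc].
    intros j. rewrite Rabs_pos_eq; apply Hf. }
  apply is_lim_seq_spec. intros eps.
  destruct (proj2 (is_lim_seq_spec _ _) (is_lim_seq_Series_tail c Hc) (pos_div_2 eps)) as [J HJ].
  destruct (proj2 (is_lim_seq_spec _ _) (is_lim_seq_sum_n_0 f J Hlim) (pos_div_2 eps))
    as [N0 HN0].
  exists N0. intros N HN. specialize (HJ J (Nat.le_refl _)). specialize (HN0 N HN).
  rewrite Rminus_0_r in *. change (pos (pos_div_2 eps)) with (eps / 2) in *.
  (* Split [f N] at [J]: the head is small for large [N], the tail is dominated by that of [c]. *)
  rewrite (Series_incr_n (f N) (S J)), <- sum_n_Reals by (auto; lia). simpl pred.
  assert (0 <= sum_n (f N) J) by (apply sum_n_nonneg; intros; apply Hf).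
  assert (0 <= Series (fun k => f N (S J + k)%nat)).
  { apply Series_nonneg; [intros; apply Hf | apply ex_series_tail, Hex]. }
  assert (Series (fun k => f N (S J + k)%nat) <= Series (fun k => c (S J + k)%nat)).
  { apply Series_le; [intros; apply Hf | apply ex_series_tail, Hc]. }
  rewrite Rabs_pos_eq in HJ, HN0 by lra. rewrite Rabs_pos_eq by lra. lra.
Qed.

Lemma is_series_Series_swap (a d : nat -> nat -> R) (y c : nat -> R) :
  (forall n, is_series (a n) (y n)) ->
  (forall n j, Rabs (a n j) <= d n j) ->
  (forall j, is_series (fun n => d n j) (c j)) -> ex_series c ->
  is_series y (Series (fun j => Series (fun n => a n j))).
Proof.
  intros Hy Had Hd Hc. set (A := Series (fun j => Series (fun n => a n j))).
  assert (Hd0 : forall n j, 0 <= d n j)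
    by (intros n j; eapply Rle_trans; [apply Rabs_pos | apply Had]).
  assert (Hexd : forall j, ex_series (fun n => d n j)) by (intros j; exists (c j); apply Hd).
  assert (Hcj : forall j, Series (fun n => d n j) = c j) by (intros j; apply is_series_unique, Hd).
  set (tail := fun N j => Series (fun k => d (S N + k)%nat j)).
  assert (Htail : forall N j, 0 <= tail N j <= c j).
  { intros N j. rewrite <- Hcj. apply (Series_tail_bounds (fun n => d n j)); [intros n |]; auto. }
  assert (Hrows : forall N, is_series (fun j => sum_n (fun n => a n j) N) (sum_n y N)).
  { induction N as [| N IH].
    - rewrite sum_O.
      apply (is_series_ext (a 0%nat)); [intros j; rewrite sum_O; reflexivity | apply Hy].
    - apply (is_series_lincomb _ _ _ _ _ 1 1 _ IH (Hy (S N)));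
        [intros j; rewrite sum_Sn | rewrite sum_Sn]; unfold plus; simpl; ring. }
  (* The error of the [N]-th partial sum is bounded by a series of column tails, which tends to 0
     by domination. *)
  assert (Herr : forall N, Rabs (A - sum_n y N) <= Series (tail N)).
  { intros N. unfold A.
    rewrite <- (is_series_unique _ _ (Hrows N)), <- Series_minus.
    - apply Rabs_Series_le; [intros j; apply (Rabs_Series_sub_sum_n_le _ (fun n => d n j));
                                auto |].
      apply (ex_series_Rabs_le _ c); [intros j; rewrite Rabs_pos_eq; apply Htail | exact Hc].
    - apply (ex_series_Rabs_le _ c); [| exact Hc].
      intros j. rewrite <- Hcj. apply Rabs_Series_le; [intros n; apply Had | apply Hexd].
    - eexists. apply Hrows. }
  pose proof (is_lim_seq_Series_dominated tail c Htail Hc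
                (fun j => is_lim_seq_Series_tail (fun n => d n j) (Hexd j))) as Htail0.
  apply is_series_is_lim_seq, (is_lim_seq_ext (fun N => A - (A - sum_n y N))); [intros N; ring |].
  replace (Finite A) with (Finite (A - 0)) by (f_equal; ring).
  apply is_lim_seq_minus'; [apply is_lim_seq_const |].
  exact (is_lim_seq_Rabs_le_0 _ _ Herr Htail0).
Qed.

(** * Series with Gaussian coefficients vanishing at geometric nodes *)

Section GeometricNodes.

Variable r : R.
Hypothesis Hr : 0 < r < 1.

Let x := (/ r) ^ 2.

Lemma node_pow_inv (k : nat) : x ^ k = / r ^ (2 * k).
Proof. unfold x. rewrite <- pow_mult, pow_inv. reflexivity. Qed.

Lemma node_pow_gt1 (k : nat) : (1 <= k)%nat -> 1 < x ^ k.
Proof.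
  intros Hk. rewrite node_pow_inv, <- Rinv_1. apply Rinv_lt_contravar.
  - rewrite Rmult_1_r. apply pow_lt. lra.
  - apply pow_lt_1_compat; [lra | lia].
Qed.

(* [lagrange_weight n] vanishes at the nodes [x ^ 1, ..., x ^ n] and is [+-1] at [x ^ 0];
   multiplying the coefficients of a series by it preserves vanishing at all nodes. *)
Fixpoint lagrange_weight (n j : nat) : R :=
  match n with
  | O => 1
  | S n => lagrange_weight n j * ((x ^ j - x ^ S n) / (x ^ S n - 1))
  end.

Lemma lagrange_weight_nodes (n j : nat) : (1 <= j <= n)%nat -> lagrange_weight n j = 0.
Proof.
  induction n as [| n IH]; intros Hj; [lia |]. cbn [lagrange_weight].
  destruct (Nat.eq_dec j (S n)) as [-> | Hne].
  - unfold Rminus at 1. rewrite Rplus_opp_r. unfold Rdiv. ring.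
  - rewrite IH by lia. ring.
Qed.

Lemma Rabs_lagrange_weight0 (n : nat) : Rabs (lagrange_weight n 0) = 1.
Proof.
  induction n as [| n IH]; cbn [lagrange_weight]; [apply Rabs_R1 |].
  pose proof (node_pow_gt1 (S n) ltac:(lia)).
  rewrite Rabs_mult, IH.
  replace ((x ^ 0 - x ^ S n) / (x ^ S n - 1)) with (- 1) by (rewrite pow_O; field; lra).
  rewrite Rabs_left; lra.
Qed.

Lemma lagrange_weight_series (beta : nat -> R) :
  (forall i, is_series (fun j => beta j * x ^ (i * j)) 0) ->
  forall n i, is_series (fun j => beta j * lagrange_weight n j * x ^ (i * j)) 0.
Proof.
  intros H0 n. induction n as [| n IH]; intros i.
  - apply (is_series_ext (fun j => beta j * x ^ (i * j))); [intros j; simpl; ring | apply H0].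
  - pose proof (node_pow_gt1 (S n) ltac:(lia)).
    apply (is_series_lincomb _ _ _ 0 0 (/ (x ^ S n - 1)) (- x ^ S n / (x ^ S n - 1)) 0
             (IH (S i)) (IH i)); [| ring].
    intros j. cbn [lagrange_weight].
    replace (S i * j)%nat with (i * j + j)%nat by lia. rewrite pow_add. field. lra.
Qed.

Lemma lagrange_factor_bound (j k : nat) : (1 <= k < j)%nat ->
  0 <= (x ^ j - x ^ k) / (x ^ k - 1) <= x ^ j * r ^ (2 * k) * exp (r ^ (2 * k) / (1 - r ^ 2)).
Proof.
  intros Hk. set (a := r ^ (2 * k)).
  assert (Ha0 : 0 < a) by (apply pow_lt; lra).
  assert (Ha1 : a <= r ^ 2) by (apply pow_le_pow_le_1; [lra | lia]).
  assert (Hr2 : r ^ 2 < 1) by (apply pow_lt_1_compat; [lra | lia]).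
  assert (Hxk : x ^ k = / a) by apply node_pow_inv.
  assert (Hxj : x ^ k <= x ^ j).
  { apply Rle_pow; [| lia]. pose proof (node_pow_gt1 1 (le_n 1)). simpl in *. lra. }
  rewrite Hxk in *.
  assert (Hax : 1 <= a * x ^ j).
  { rewrite <- (Rinv_r a) by lra. apply Rmult_le_compat_l; lra. }
  replace ((x ^ j - / a) / (/ a - 1)) with ((a * x ^ j - 1) / (1 - a)) by (field; lra).
  split; [apply Rdiv_le_0_compat; lra |].
  (* Bounding [1 / (1 - r^(2k))] by an exponential keeps the product over [k <= n] bounded. *)
  assert (Hexp : 1 / (1 - a) <= exp (a / (1 - r ^ 2))).
  { apply Rle_trans with (exp (a / (1 - a))).
    - pose proof (exp_ineq1_le (a / (1 - a))).
      replace (1 / (1 - a)) with (1 + a / (1 - a)) by (field; lra). lra.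
    - apply exp_le_exp_of_le. unfold Rdiv. apply Rmult_le_compat_l; [lra |].
      apply Rinv_le_contravar; lra. }
  apply Rle_trans with (a * x ^ j * (1 / (1 - a))).
  - unfold Rdiv. rewrite Rmult_1_l. apply Rmult_le_compat_r; [| lra].
    left. apply Rinv_0_lt_compat. lra.
  - replace (x ^ j * a * exp (a / (1 - r ^ 2))) with (a * x ^ j * exp (a / (1 - r ^ 2))) by ring.
    apply Rmult_le_compat_l; lra.
Qed.

Lemma Rabs_lagrange_weight_le (n j : nat) : (n < j)%nat ->
  Rabs (lagrange_weight n j) <=
  x ^ (j * n) * r ^ (n * S n) * exp ((r ^ 2 - r ^ (2 * S n)) / (1 - r ^ 2) ^ 2).
Proof.
  induction n as [| n IH]; intros Hj.
  - cbn [lagrange_weight].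
    rewrite Rabs_R1, Nat.mul_0_r, Nat.mul_1_r, Rminus_diag, Rdiv_0_l, exp_0. simpl. lra.
  - cbn [lagrange_weight]. rewrite Rabs_mult.
    destruct (lagrange_factor_bound j (S n) ltac:(lia)) as [F0 F1].
    rewrite (Rabs_pos_eq _ F0).
    eapply Rle_trans;
      [apply Rmult_le_compat; [apply Rabs_pos | exact F0 | apply IH; lia | exact F1] |].
    assert (Hr2 : r ^ 2 < 1) by (apply pow_lt_1_compat; [lra | lia]).
    replace (j * S n)%nat with (j * n + j)%nat by lia.
    replace (S n * S (S n))%nat with (n * S n + 2 * S n)%nat by lia.
    replace ((r ^ 2 - r ^ (2 * S (S n))) / (1 - r ^ 2) ^ 2)
      with ((r ^ 2 - r ^ (2 * S n)) / (1 - r ^ 2) ^ 2 + r ^ (2 * S n) / (1 - r ^ 2))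
      by (replace (2 * S (S n))%nat with (2 * S n + 2)%nat by lia; rewrite pow_add; field; lra).
    rewrite exp_plus, !pow_add. right. ring.
Qed.

Let K := exp (1 / (1 - r ^ 2) ^ 2).

Lemma Rabs_coef_lagrange_weight_le (A : R) (beta : nat -> R) (n k : nat) :
  (forall j, Rabs (beta j) <= A * r ^ (j * j)) ->
  Rabs (beta (S n + k)%nat * lagrange_weight n (S n + k)) <= A * K * r ^ S n * r ^ k.
Proof.
  intros Hb. set (j := (S n + k)%nat).
  assert (HA : 0 <= A) by (pose proof (Rle_trans _ _ _ (Rabs_pos _) (Hb 0%nat)); simpl in *; lra).
  assert (HK : 0 <= K) by (left; apply exp_pos).
  assert (Hxr : 0 <= x ^ (j * n) * r ^ (n * S n)).
  { rewrite node_pow_inv. apply Rmult_le_pos; [left; apply Rinv_0_lt_compat, pow_lt | apply pow_le];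
      lra. }
  assert (Hr2 : r ^ 2 < 1) by (apply pow_lt_1_compat; [lra | lia]).
  assert (HE : exp ((r ^ 2 - r ^ (2 * S n)) / (1 - r ^ 2) ^ 2) <= K).
  { apply exp_le_exp_of_le. unfold Rdiv. apply Rmult_le_compat_r.
    - left. apply Rinv_0_lt_compat, pow_lt. lra.
    - pose proof (pow_le r (2 * S n) ltac:(lra)). lra. }
  (* The Gaussian decay of [beta] beats the growth of the weight: [(j - n) (j - n - 1) >= 0]. *)
  assert (Hdecay : r ^ (j * j) * (x ^ (j * n) * r ^ (n * S n)) <= r ^ S n * r ^ k).
  { rewrite node_pow_inv, <- pow_add.
    assert (0 < r ^ (2 * (j * n))) by (apply pow_lt; lra).
    apply (Rmult_le_reg_r (r ^ (2 * (j * n)))); [lra |].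
    replace (r ^ (j * j) * (/ r ^ (2 * (j * n)) * r ^ (n * S n)) * r ^ (2 * (j * n)))
      with (r ^ (j * j + n * S n)) by (rewrite pow_add; field; lra).
    rewrite <- !pow_add. apply pow_le_pow_le_1; [lra | unfold j; nia]. }
  rewrite Rabs_mult.
  apply Rle_trans with (A * r ^ (j * j) * (x ^ (j * n) * r ^ (n * S n) * K)).
  - apply Rmult_le_compat; [apply Rabs_pos | apply Rabs_pos | apply Hb |].
    eapply Rle_trans; [apply Rabs_lagrange_weight_le; unfold j; lia |].
    apply Rmult_le_compat_l; assumption.
  - replace (A * r ^ (j * j) * (x ^ (j * n) * r ^ (n * S n) * K))
      with (A * K * (r ^ (j * j) * (x ^ (j * n) * r ^ (n * S n)))) by ring.
    replace (A * K * r ^ S n * r ^ k) with (A * K * (r ^ S n * r ^ k)) by ring.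
    apply Rmult_le_compat_l; [apply Rmult_le_pos |]; assumption.
Qed.

Lemma coef0_eq0_of_vanishing_at_nodes (A : R) (beta : nat -> R) :
  (forall j, Rabs (beta j) <= A * r ^ (j * j)) ->
  (forall i, is_series (fun j => beta j * x ^ (i * j)) 0) ->
  beta 0%nat = 0.
Proof.
  intros Hb Hv. apply (eq0_of_Rabs_le_geom _ (A * K * r / (1 - r)) r); [lra |]. intros n.
  assert (H : Rabs (beta 0%nat * lagrange_weight n 0) <= A * K * r ^ S n / (1 - r)).
  { apply (Rabs_series_head_le (fun j => beta j * lagrange_weight n j) n); [lra | | |].
    - apply (is_series_ext (fun j => beta j * lagrange_weight n j * x ^ (0 * j)));
        [intros j; simpl; ring | apply lagrange_weight_series, Hv].
    - intros k Hk. rewrite lagrange_weight_nodes by exact Hk. ring.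
    - intros k. apply Rabs_coef_lagrange_weight_le, Hb. }
  rewrite Rabs_mult, Rabs_lagrange_weight0, Rmult_1_r in H.
  replace (A * K * r / (1 - r) * r ^ n) with (A * K * r ^ S n / (1 - r)) by (simpl; field; lra).
  exact H.
Qed.

Theorem coef_eq0_of_vanishing_at_nodes (A : R) (beta : nat -> R) :
  (forall j, Rabs (beta j) <= A * r ^ (j * j)) ->
  (forall i, is_series (fun j => beta j * x ^ (i * j)) 0) ->
  forall m, beta m = 0.
Proof.
  intros Hb Hv m. induction m as [m IH] using lt_wf_ind.
  assert (HA : 0 <= A) by (pose proof (Rle_trans _ _ _ (Rabs_pos _) (Hb 0%nat)); simpl in *; lra).
  rewrite <- (Nat.add_0_r m).
  apply (coef0_eq0_of_vanishing_at_nodes A (fun j => beta (m + j)%nat)).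
  - intros j. eapply Rle_trans; [apply Hb |].
    apply Rmult_le_compat_l; [exact HA |]. apply pow_le_pow_le_1; [lra | nia].
  - intros i.
    assert (Hxm : 0 < x ^ (i * m)).
    { apply pow_lt. pose proof (node_pow_gt1 1 (le_n 1)). simpl in *. lra. }
    assert (Hs : is_series (fun j => beta (m + j)%nat * x ^ (i * (m + j))) 0).
    { apply (is_series_drop_zeros (fun j => beta j * x ^ (i * j))); [| apply Hv].
      intros k Hk. rewrite IH by exact Hk. ring. }
    apply (is_series_lincomb _ _ _ 0 0 (/ x ^ (i * m)) 0 0 Hs Hs); [| ring].
    intros j. cbv beta. replace (i * (m + j))%nat with (i * m + i * j)%nat by lia.
    rewrite pow_add. field. lra.
Qed.

End GeometricNodes.

(** * Sums over the lattice [q^Z gamma] *)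

(* Sums over [Z] are taken with the symmetric partial sums of the Jackson integral.  These are
   not shift invariant in general; a shift is harmless once the terms tend to 0 at both ends. *)
Definition is_zseries (u : Z -> R) (l : R) : Prop :=
  is_series (fun n => u (Z.of_nat n) + u (- Z.of_nat (S n))%Z) l.

Definition is_lim_Z0 (u : Z -> R) : Prop :=
  is_lim_seq (fun n => u (Z.of_nat n)) 0 /\ is_lim_seq (fun n => u (- Z.of_nat n)%Z) 0.

Lemma is_zseries_lincomb (u v w : Z -> R) (lu lv alpha beta l : R) :
  is_zseries u lu -> is_zseries v lv ->
  (forall m, w m = alpha * u m + beta * v m) -> l = alpha * lu + beta * lv -> is_zseries w l.
Proof.
  intros Hu Hv Hw Hl.
  apply (is_series_lincomb _ _ _ lu lv alpha beta _ Hu Hv); [| exact Hl].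
  intros n. rewrite !Hw. ring.
Qed.

Lemma is_zseries_ext (u v : Z -> R) (l : R) :
  (forall m, v m = u m) -> is_zseries u l -> is_zseries v l.
Proof.
  intros Huv Hu. apply (is_zseries_lincomb u u v l l 1 0 l Hu Hu); [intros m; rewrite Huv |]; ring.
Qed.

Lemma is_zseries_unique (u : Z -> R) (l l' : R) : is_zseries u l -> is_zseries u l' -> l = l'.
Proof. intros H H'. rewrite <- (is_series_unique _ _ H). apply is_series_unique, H'. Qed.

Lemma is_lim_Z0_lincomb (u v w : Z -> R) (alpha beta : R) :
  is_lim_Z0 u -> is_lim_Z0 v -> (forall m, w m = alpha * u m + beta * v m) -> is_lim_Z0 w.
Proof.
  assert (Hlin : forall a b : nat -> R, is_lim_seq a 0 -> is_lim_seq b 0 ->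
            is_lim_seq (fun n => alpha * a n + beta * b n) 0).
  { intros a b Ha Hb. replace (Finite 0) with (Finite (alpha * 0 + beta * 0)) by (f_equal; ring).
    apply is_lim_seq_plus'; apply is_lim_seq_mult'; try apply is_lim_seq_const; assumption. }
  intros [Hu1 Hu2] [Hv1 Hv2] Hw.
  split; eapply is_lim_seq_ext; try (intros n; symmetry; apply Hw); apply Hlin; assumption.
Qed.

Lemma is_lim_Z0_ext (u v : Z -> R) : (forall m, v m = u m) -> is_lim_Z0 u -> is_lim_Z0 v.
Proof. intros Huv Hu. apply (is_lim_Z0_lincomb u u v 1 0 Hu Hu). intros m; rewrite Huv; ring. Qed.

Lemma sum_n_zseries_pred (u : Z -> R) (N : nat) :
  sum_n (fun n => u (Z.of_nat n - 1)%Z + u (- Z.of_nat (S n) - 1)%Z) N =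
  sum_n (fun n => u (Z.of_nat n) + u (- Z.of_nat (S n))%Z) N
  - u (Z.of_nat N) + u (- Z.of_nat (S (S N)))%Z.
Proof.
  induction N as [| N IH].
  - rewrite !sum_O. replace (Z.of_nat 0 - 1)%Z with (- Z.of_nat 1)%Z by lia.
    replace (- Z.of_nat 1 - 1)%Z with (- Z.of_nat 2)%Z by lia. simpl. ring.
  - rewrite !sum_Sn, IH.
    replace (Z.of_nat (S N) - 1)%Z with (Z.of_nat N) by lia.
    replace (- Z.of_nat (S (S N)) - 1)%Z with (- Z.of_nat (S (S (S N))))%Z by lia.
    unfold plus; simpl. ring.
Qed.

Lemma is_zseries_pred (u : Z -> R) (l : R) :
  is_lim_Z0 u -> is_zseries u l -> is_zseries (fun m => u (m - 1)%Z) l.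
Proof.
  intros [H1 H2] H. unfold is_zseries in *. rewrite is_series_is_lim_seq in *.
  apply (is_lim_seq_ext _ _ _ (fun N => eq_sym (sum_n_zseries_pred u N))).
  replace (Finite l) with (Finite (l - 0 + 0)) by (f_equal; ring).
  apply is_lim_seq_plus'; [apply is_lim_seq_minus'; assumption |].
  apply (is_lim_seq_incr_n _ 2) in H2.
  eapply is_lim_seq_ext; [| exact H2]. intros n. cbv beta. f_equal. lia.
Qed.

Lemma is_lim_Z0_pred (u : Z -> R) : is_lim_Z0 u -> is_lim_Z0 (fun m => u (m - 1)%Z).
Proof.
  intros [H1 H2]. apply is_lim_seq_incr_1 in H2. split.
  - apply is_lim_seq_incr_1. eapply is_lim_seq_ext; [| exact H1]. intros n; cbv beta. f_equal; lia.
  - eapply is_lim_seq_ext; [| exact H2]. intros n; cbv beta. f_equal; lia.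
Qed.

Lemma is_zseries_sub_nat (u : Z -> R) (l : R) (p : nat) :
  is_lim_Z0 u -> is_zseries u l -> is_zseries (fun m => u (m - Z.of_nat p)%Z) l.
Proof.
  intros Hn Hs. enough (H : is_zseries (fun m => u (m - Z.of_nat p)%Z) l /\
                            is_lim_Z0 (fun m => u (m - Z.of_nat p)%Z)) by apply H.
  induction p as [| p [IHs IHn]].
  - split; [eapply is_zseries_ext | eapply is_lim_Z0_ext]; try eassumption;
      intros m; f_equal; lia.
  - split; [eapply is_zseries_ext; [| apply (is_zseries_pred _ _ IHn IHs)]
           | eapply is_lim_Z0_ext; [| apply (is_lim_Z0_pred _ IHn)]];
      intros m; cbv beta; f_equal; lia.
Qed.

(** * The weight [t / (-t^2; q^2)_oo] and its moments *)

Fixpoint qpoch_sq (q t : R) (n : nat) : R :=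
  match n with O => 1 | S n => qpoch_sq q t n * (1 + t ^ 2 * (q ^ 2) ^ n) end.

Lemma qpoch_sq_factor_ge1 (q t : R) (n : nat) : 1 <= 1 + t ^ 2 * (q ^ 2) ^ n.
Proof.
  assert (0 <= t ^ 2 * (q ^ 2) ^ n); [| lra].
  apply Rmult_le_pos; [apply pow2_ge_0 | apply pow_le, pow2_ge_0].
Qed.

Lemma qpoch_sq_ge1 (q t : R) (n : nat) : 1 <= qpoch_sq q t n.
Proof.
  induction n as [| n IH]; cbn [qpoch_sq]; [lra |].
  pose proof (qpoch_sq_factor_ge1 q t n). nra.
Qed.

Lemma qpoch_sq_le_succ (q t : R) (n : nat) : qpoch_sq q t n <= qpoch_sq q t (S n).
Proof.
  cbn [qpoch_sq]. pose proof (qpoch_sq_ge1 q t n). pose proof (qpoch_sq_factor_ge1 q t n). nra.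
Qed.

Lemma qpoch_sq_succ_shift (q t : R) (n : nat) :
  qpoch_sq q t (S n) = (1 + t ^ 2) * qpoch_sq q (q * t) n.
Proof. induction n as [| n IH]; [simpl; ring |]. cbn [qpoch_sq] in *. rewrite IH. simpl. ring. Qed.

Lemma qpoch_sq_lower (q t : R) (n : nat) :
  0 <= q -> 0 <= t -> t ^ (2 * n) * q ^ (n * (n - 1)) <= qpoch_sq q t n.
Proof.
  intros Hq Ht. induction n as [| n IH]; [simpl; lra |]. cbn [qpoch_sq].
  replace (2 * S n)%nat with (2 * n + 2)%nat by lia.
  replace (S n * (S n - 1))%nat with (n * (n - 1) + 2 * n)%nat by (destruct n; simpl; nia).
  rewrite !pow_add, <- pow_mult.
  assert (0 <= t ^ (2 * n) * q ^ (n * (n - 1))) by (apply Rmult_le_pos; apply pow_le; lra).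
  assert (0 <= t ^ 2 * q ^ (2 * n)) by (apply Rmult_le_pos; apply pow_le; lra).
  replace (t ^ (2 * n) * t ^ 2 * (q ^ (n * (n - 1)) * q ^ (2 * n)))
    with (t ^ (2 * n) * q ^ (n * (n - 1)) * (t ^ 2 * q ^ (2 * n))) by ring.
  apply Rmult_le_compat; lra.
Qed.

Lemma jpt_pos (q gamma : R) (m : Z) : 0 < q -> 0 < gamma -> 0 < jpt q gamma m.
Proof. intros Hq Hg. apply Rmult_lt_0_compat; [apply powerRZ_lt |]; assumption. Qed.

Lemma jpt_add_nat (q gamma : R) (m : Z) (p : nat) :
  0 < q -> jpt q gamma (m + Z.of_nat p) = q ^ p * jpt q gamma m.
Proof. intros Hq. unfold jpt. rewrite powerRZ_add, <- pow_powerRZ by lra. ring. Qed.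

Lemma jpt_of_nat (q gamma : R) (n : nat) : jpt q gamma (Z.of_nat n) = q ^ n * gamma.
Proof. unfold jpt. rewrite <- pow_powerRZ. reflexivity. Qed.

Lemma jpt_opp_nat (q gamma : R) (n : nat) : jpt q gamma (- Z.of_nat n) = gamma / q ^ n.
Proof. unfold jpt. rewrite powerRZ_neg', <- pow_powerRZ. unfold Rdiv. ring. Qed.

Section JacksonMoments.

Variables q gamma : R.
Variable P : R -> R.
Hypothesis Hq : 0 < q < 1.
Hypothesis Hgamma : 0 < gamma.
Hypothesis HP : forall t, is_lim_seq (qpoch_sq q t) (P t).

Let t (m : Z) : R := jpt q gamma m.

Lemma qpoch_sq_le_lim (u : R) (n : nat) : qpoch_sq q u n <= P u.
Proof. apply is_lim_seq_incr_compare; [apply HP | apply qpoch_sq_le_succ]. Qed.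

Lemma qpoch_lim_ge1 (u : R) : 1 <= P u.
Proof. exact (Rle_trans _ _ _ (qpoch_sq_ge1 q u 0) (qpoch_sq_le_lim u 0)). Qed.

Lemma qpoch_lim_shift (u : R) : P u = (1 + u ^ 2) * P (q * u).
Proof.
  assert (H1 : is_lim_seq (fun n => qpoch_sq q u (S n)) (P u))
    by (apply -> is_lim_seq_incr_1; apply HP).
  assert (H2 : is_lim_seq (fun n => qpoch_sq q u (S n)) ((1 + u ^ 2) * P (q * u))).
  { apply (is_lim_seq_ext (fun n => (1 + u ^ 2) * qpoch_sq q (q * u) n));
      [intros n; symmetry; apply qpoch_sq_succ_shift |].
    apply (is_lim_seq_scal_l _ (1 + u ^ 2) (P (q * u))), HP. }
  apply is_lim_seq_unique in H1, H2. rewrite H1 in H2. injection H2. auto.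
Qed.

Lemma t_pos (m : Z) : 0 < t m.
Proof. apply jpt_pos; lra. Qed.

Definition jweight (m : Z) : R := t m / P (t m).

Lemma jweight_pos (m : Z) : 0 < jweight m.
Proof. apply Rdiv_lt_0_compat; [apply t_pos | pose proof (qpoch_lim_ge1 (t m)); lra]. Qed.

Lemma jweight_le (m : Z) : jweight m <= t m.
Proof.
  unfold jweight. pose proof (qpoch_lim_ge1 (t m)). pose proof (t_pos m).
  apply (Rmult_le_reg_r (P (t m))); [lra |]. unfold Rdiv. rewrite Rmult_assoc, Rinv_l by lra. nra.
Qed.

Lemma jweight_succ (m : Z) : jweight (m + 1) = q * (1 + t m ^ 2) * jweight m.
Proof.
  unfold jweight, t. replace (m + 1)%Z with (m + Z.of_nat 1)%Z by lia.
  rewrite jpt_add_nat, (qpoch_lim_shift (jpt q gamma m)), pow_1 by lra.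
  pose proof (qpoch_lim_ge1 (q * jpt q gamma m)). pose proof (pow2_ge_0 (jpt q gamma m)).
  field. lra.
Qed.

Lemma jweight_add_nat (m : Z) (p : nat) :
  jweight (m + Z.of_nat p) = q ^ p * qpoch_sq q (t m) p * jweight m.
Proof.
  induction p as [| p IH]; [rewrite Z.add_0_r; simpl; ring |].
  replace (m + Z.of_nat (S p))%Z with (m + Z.of_nat p + 1)%Z by lia.
  rewrite jweight_succ, IH. unfold t. rewrite jpt_add_nat by lra. cbn [qpoch_sq].
  rewrite <- pow_mult, Rpow_mult_distr, <- pow_mult, Nat.mul_comm. simpl pow. ring.
Qed.

Definition moment_term (j : nat) (m : Z) : R := jweight m * t m ^ (2 * j).

Lemma moment_term_pos (j : nat) (m : Z) : 0 < moment_term j m.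
Proof. apply Rmult_lt_0_compat; [apply jweight_pos | apply pow_lt, t_pos]. Qed.

Lemma moment_term_of_nat_le (j n : nat) :
  moment_term j (Z.of_nat n) <= gamma ^ (2 * j + 1) * q ^ n.
Proof.
  unfold moment_term. pose proof (pow_le _ (2 * j) (Rlt_le _ _ (t_pos (Z.of_nat n)))).
  eapply Rle_trans; [apply Rmult_le_compat_r; [assumption | apply jweight_le] |].
  rewrite <- (pow_1 (t _)) at 1. rewrite <- pow_add. unfold t. rewrite jpt_of_nat.
  rewrite Rpow_mult_distr, <- pow_mult, Rmult_comm, Nat.add_comm.
  apply Rmult_le_compat_l; [apply pow_le; lra |]. apply pow_le_pow_le_1; [lra | nia].
Qed.

(* The Gaussian growth of [P] at [t -> oo] makes every moment converge. *)
Lemma moment_term_opp_le (j n : nat) :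
  moment_term j (- Z.of_nat (S n)) <= q ^ S n / (gamma * q ^ (j * S j)).
Proof.
  unfold moment_term, jweight. set (u := t (- Z.of_nat (S n))).
  assert (Hu : 0 < u) by apply t_pos.
  assert (Eu : u = gamma / q ^ S n) by apply jpt_opp_nat.
  pose proof (Rle_trans _ _ _ (qpoch_sq_lower q u (S j) ltac:(lra) ltac:(lra))
                (qpoch_sq_le_lim u (S j))) as Hlow.
  replace (S j * (S j - 1))%nat with (j * S j)%nat in Hlow by (simpl; nia).
  assert (HqS : 0 < q ^ S n) by (apply pow_lt; lra).
  assert (Hqj : 0 < q ^ (j * S j)) by (apply pow_lt; lra).
  assert (HL : 0 < u ^ (2 * S j) * q ^ (j * S j))
    by (apply Rmult_lt_0_compat; [apply pow_lt |]; lra).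
  apply Rle_trans with (u ^ (2 * j + 1) / (u ^ (2 * S j) * q ^ (j * S j))).
  - replace (u / P u * u ^ (2 * j)) with (u ^ (2 * j + 1) / P u)
      by (rewrite pow_add; field; pose proof (qpoch_lim_ge1 u); lra).
    unfold Rdiv. apply Rmult_le_compat_l; [apply pow_le; lra |]. apply Rinv_le_contravar; lra.
  - right. replace (2 * S j)%nat with (2 * j + 1 + 1)%nat by lia. rewrite !pow_add, Eu.
    assert (0 < (gamma / q ^ S n) ^ (2 * j)) by (apply pow_lt, Rdiv_lt_0_compat; lra).
    field. lra.
Qed.

Lemma ex_series_moment_term_of_nat (j : nat) : ex_series (fun n => moment_term j (Z.of_nat n)).
Proof.
  apply (ex_series_Rabs_le _ (fun n => gamma ^ (2 * j + 1) * q ^ n)).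
  - intros n. rewrite Rabs_pos_eq by (left; apply moment_term_pos). apply moment_term_of_nat_le.
  - apply ex_series_scal_geom. rewrite Rabs_pos_eq; lra.
Qed.

Lemma ex_series_moment_term_opp (j : nat) : ex_series (fun n => moment_term j (- Z.of_nat (S n))).
Proof.
  apply (ex_series_Rabs_le _ (fun n => q / (gamma * q ^ (j * S j)) * q ^ n)).
  - intros n. rewrite Rabs_pos_eq by (left; apply moment_term_pos).
    eapply Rle_trans; [apply moment_term_opp_le |]. right. simpl pow at 1. unfold Rdiv. ring.
  - apply ex_series_scal_geom. rewrite Rabs_pos_eq; lra.
Qed.

Definition moment (j : nat) : R :=
  Series (fun n => moment_term j (Z.of_nat n) + moment_term j (- Z.of_nat (S n))).

Lemma is_zseries_moment (j : nat) : is_zseries (moment_term j) (moment j).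
Proof.
  destruct (ex_series_moment_term_of_nat j) as [l1 H1].
  destruct (ex_series_moment_term_opp j) as [l2 H2].
  apply Series_correct. exists (l1 + l2).
  apply (is_series_lincomb _ _ _ l1 l2 1 1 _ H1 H2); [intros n |]; ring.
Qed.

Lemma is_lim_Z0_moment_term (j : nat) : is_lim_Z0 (moment_term j).
Proof.
  split; [apply ex_series_lim_0, ex_series_moment_term_of_nat |].
  apply is_lim_seq_incr_1, ex_series_lim_0, ex_series_moment_term_opp.
Qed.

Lemma moment_pos (j : nat) : 0 < moment j.
Proof.
  set (a := fun n => moment_term j (Z.of_nat n) + moment_term j (- Z.of_nat (S n))).
  assert (Ha : forall n, 0 < a n).
  { intros n. pose proof (moment_term_pos j (Z.of_nat n)).
    pose proof (moment_term_pos j (- Z.of_nat (S n))). unfold a. lra. }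
  assert (Hex : ex_series a) by (eexists; apply is_zseries_moment).
  unfold moment. fold a. rewrite Series_incr_1 by exact Hex.
  pose proof (Series_nonneg (fun n => a (S n)) (fun n => Rlt_le _ _ (Ha (S n)))
                (proj1 (ex_series_incr_1 a) Hex)).
  pose proof (Ha 0%nat). lra.
Qed.

(* Shifting [m -> m - 1] in [moment_term (S j)] and using [jweight_succ] gives a linear
   recurrence between consecutive moments. *)
Lemma moment_succ (j : nat) : q * (moment j + moment (S j)) = (/ q) ^ (2 * j) * moment j.
Proof.
  set (v := fun m => q * moment_term j m + q * moment_term (S j) m).
  assert (Hv : is_zseries v (q * moment j + q * moment (S j)))
    by (apply (is_zseries_lincomb _ _ _ _ _ q q _
                 (is_zseries_moment j) (is_zseries_moment (S j))); reflexivity).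
  assert (Hvn : is_lim_Z0 v)
    by (apply (is_lim_Z0_lincomb _ _ _ q q
                 (is_lim_Z0_moment_term j) (is_lim_Z0_moment_term (S j))); reflexivity).
  assert (Hshift : is_zseries (fun m => v (m - 1)%Z) ((/ q) ^ (2 * j) * moment j)).
  { apply (is_zseries_lincomb _ _ _ _ _ ((/ q) ^ (2 * j)) 0 _
             (is_zseries_moment j) (is_zseries_moment j)); [| ring].
    intros m. unfold v, moment_term.
    pose proof (jweight_succ (m - 1)) as Ws. replace (m - 1 + 1)%Z with m in Ws by lia. rewrite Ws.
    assert (Et : t m = q * t (m - 1)%Z).
    { unfold t. replace m with (m - 1 + Z.of_nat 1)%Z at 1 by lia.
      rewrite jpt_add_nat by lra. simpl. ring. }
    rewrite Et. replace (2 * S j)%nat with (2 * j + 2)%nat by lia.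
    rewrite pow_add, Rpow_mult_distr, pow_inv.
    assert (0 < q ^ (2 * j)) by (apply pow_lt; lra). field. lra. }
  pose proof (is_zseries_unique _ _ _ (is_zseries_pred _ _ Hvn Hv) Hshift). lra.
Qed.

Lemma moment_le (j : nat) : moment j * q ^ (j * j) <= moment 0.
Proof.
  induction j as [| j IH]; [simpl; lra |].
  pose proof (moment_succ j). pose proof (moment_pos j). pose proof (moment_pos (S j)).
  assert (Hq2 : 0 < q ^ (2 * j + 1)) by (apply pow_lt; lra).
  assert (Hle : moment (S j) * q ^ (2 * j + 1) <= moment j).
  { rewrite pow_add, pow_1, <- (Rinv_inv (q ^ (2 * j))), <- pow_inv.
    assert (0 < (/ q) ^ (2 * j)) by (apply pow_lt, Rinv_0_lt_compat; lra).
    apply (Rmult_le_reg_r ((/ q) ^ (2 * j))); [lra |]. field_simplify; nra. }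
  replace (S j * S j)%nat with (j * j + (2 * j + 1))%nat by lia. rewrite pow_add.
  eapply Rle_trans; [| exact IH].
  replace (moment (S j) * (q ^ (j * j) * q ^ (2 * j + 1)))
    with (moment (S j) * q ^ (2 * j + 1) * q ^ (j * j)) by ring.
  apply Rmult_le_compat_r; [apply pow_le; lra | exact Hle].
Qed.

Lemma t_sub_nat_pow (m : Z) (p j : nat) :
  t (m - Z.of_nat p) ^ (2 * j) = ((/ q) ^ 2) ^ (p * j) * t m ^ (2 * j).
Proof.
  assert (Et : t m = q ^ p * t (m - Z.of_nat p)).
  { unfold t. rewrite <- jpt_add_nat by lra. f_equal. lia. }
  assert (0 < q ^ p) by (apply pow_lt; lra).
  rewrite Et, Rpow_mult_distr, <- !pow_mult, pow_inv.
  replace (p * (2 * j))%nat with (2 * (p * j))%nat by lia.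
  field. apply pow_nonzero. lra.
Qed.

Section Uniqueness.

Variables (b : nat -> R) (g : R -> R) (B : R).
Hypothesis Hb : forall j, Rabs (b j) <= B * q ^ (2 * j * j).
Hypothesis Hg : forall u, is_series (fun j => b j * u ^ (2 * j)) (g u).
Hypothesis Hz : forall k, is_zseries (fun m => jweight m * g (t m) * t m ^ (2 * k)) 0.
Hypothesis Hnull : forall k, is_lim_Z0 (fun m => jweight m * g (t m) * t m ^ (2 * k)).

Lemma jackson_qpoch_vanish (n k : nat) :
  let u m := jweight m * g (t m) * t m ^ (2 * k) * qpoch_sq q (t m) n in
  is_zseries u 0 /\ is_lim_Z0 u.
Proof.
  revert k. induction n as [| n IH]; intros k u.
  - split; [apply (is_zseries_ext _ _ _ (fun m => Rmult_1_r _) (Hz k)) |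
            apply (is_lim_Z0_ext _ _ (fun m => Rmult_1_r _) (Hnull k))].
  - destruct (IH k) as [Hs0 Hl0], (IH (S k)) as [Hs1 Hl1].
    assert (Hu : forall m,
               u m = 1 * (jweight m * g (t m) * t m ^ (2 * k) * qpoch_sq q (t m) n)
                     + (q ^ 2) ^ n * (jweight m * g (t m) * t m ^ (2 * S k) * qpoch_sq q (t m) n)).
    { intros m. unfold u. cbn [qpoch_sq]. replace (2 * S k)%nat with (2 * k + 2)%nat by lia.
      rewrite pow_add. ring. }
    split; [apply (is_zseries_lincomb _ _ _ _ _ _ _ _ Hs0 Hs1 Hu); ring |
            apply (is_lim_Z0_lincomb _ _ _ _ _ Hl0 Hl1 Hu)].
Qed.

Lemma jackson_shift_vanish (p : nat) :
  is_zseries (fun m => jweight m * g (t (m - Z.of_nat p))) 0.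
Proof.
  destruct (jackson_qpoch_vanish p 0) as [Hs Hl]. cbv zeta in Hs, Hl.
  set (u := fun m => jweight (m + Z.of_nat p) * g (t m)).
  assert (Hu : forall m, u m = q ^ p * (jweight m * g (t m) * t m ^ (2 * 0) * qpoch_sq q (t m) p)
                               + 0 * (jweight m * g (t m) * t m ^ (2 * 0) * qpoch_sq q (t m) p)).
  { intros m. unfold u. rewrite jweight_add_nat. simpl pow. ring. }
  apply (is_zseries_ext (fun m => u (m - Z.of_nat p)%Z)); [intros m; unfold u; do 2 f_equal; lia |].
  apply is_zseries_sub_nat; [exact (is_lim_Z0_lincomb _ _ _ _ _ Hl Hl Hu) |].
  apply (is_zseries_lincomb _ _ _ _ _ _ _ _ Hs Hs Hu). ring.
Qed.

Lemma coef_bound_nonneg : 0 <= B.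
Proof. pose proof (Rle_trans _ _ _ (Rabs_pos _) (Hb 0%nat)). simpl in *. lra. Qed.

Lemma coef_moment_le (j : nat) : Rabs (b j) * moment j <= B * moment 0 * q ^ (j * j).
Proof.
  pose proof (moment_le j). pose proof (moment_pos j). pose proof coef_bound_nonneg.
  assert (Hqj : 0 <= q ^ (j * j)) by (apply pow_le; lra).
  eapply Rle_trans; [apply Rmult_le_compat_r; [lra | apply Hb] |].
  replace (2 * j * j)%nat with (j * j + j * j)%nat by lia. rewrite pow_add.
  replace (B * (q ^ (j * j) * q ^ (j * j)) * moment j)
    with (B * q ^ (j * j) * (moment j * q ^ (j * j))) by ring.
  replace (B * moment 0 * q ^ (j * j)) with (B * q ^ (j * j) * moment 0) by ring.
  apply Rmult_le_compat_l; [nra | assumption].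
Qed.

Let X := (/ q) ^ 2.

Lemma ex_series_coef_moment_nodes (p : nat) :
  ex_series (fun j => Rabs (b j) * X ^ (p * j) * moment j).
Proof.
  apply (ex_series_Rabs_le _ (fun j => B * moment 0 * / q ^ (p + p * p) * q ^ j));
    [| apply ex_series_scal_geom; rewrite Rabs_pos_eq; lra].
  intros j. pose proof (coef_moment_le j) as Hj. pose proof (moment_pos j).
  assert (HX : X ^ (p * j) = / q ^ (2 * (p * j)))
    by (unfold X; rewrite <- pow_mult, pow_inv; reflexivity).
  assert (Hq1 : 0 < q ^ (2 * (p * j))) by (apply pow_lt; lra).
  assert (Hq2 : 0 < q ^ (p + p * p)) by (apply pow_lt; lra).
  assert (HB : 0 <= B * moment 0)
    by (apply Rmult_le_pos; [apply coef_bound_nonneg | apply Rlt_le, moment_pos]).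
  (* [j + 2 p j <= j^2 + p + p^2] since [(j - p) (j - p - 1) >= 0]. *)
  assert (Hqq : q ^ (j * j) * q ^ (p + p * p) <= q ^ j * q ^ (2 * (p * j))).
  { rewrite <- !pow_add. apply pow_le_pow_le_1; [lra |].
    destruct (Nat.le_gt_cases j p);
      [replace p with (j + (p - j))%nat by lia | replace j with (p + S (j - p - 1))%nat by lia];
      nia. }
  assert (0 <= Rabs (b j) * / q ^ (2 * (p * j)) * moment j).
  { apply Rmult_le_pos; [apply Rmult_le_pos; [apply Rabs_pos | left; apply Rinv_0_lt_compat] |];
      lra. }
  rewrite HX, Rabs_pos_eq by assumption.
  apply (Rmult_le_reg_r (q ^ (2 * (p * j)) * q ^ (p + p * p))); [nra |].
  replace (Rabs (b j) * / q ^ (2 * (p * j)) * moment j * (q ^ (2 * (p * j)) * q ^ (p + p * p)))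
    with (Rabs (b j) * moment j * q ^ (p + p * p)) by (field; lra).
  replace (B * moment 0 * / q ^ (p + p * p) * q ^ j * (q ^ (2 * (p * j)) * q ^ (p + p * p)))
    with (B * moment 0 * (q ^ j * q ^ (2 * (p * j)))) by (field; lra).
  eapply Rle_trans; [apply Rmult_le_compat_r; [lra | exact Hj] |].
  rewrite Rmult_assoc. apply Rmult_le_compat_l; assumption.
Qed.

(* Expanding [g] in the shifted sums and swapping the two summations. *)
Lemma coef_moment_series_vanish (p : nat) : is_series (fun j => b j * moment j * X ^ (p * j)) 0.
Proof.
  set (w := fun j n => moment_term j (Z.of_nat n) + moment_term j (- Z.of_nat (S n))).
  set (a := fun n j => b j * X ^ (p * j) * w j n).
  assert (Hrow : forall n, is_series (a n)
            (jweight (Z.of_nat n) * g (t (Z.of_nat n - Z.of_nat p)) +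
             jweight (- Z.of_nat (S n)) * g (t (- Z.of_nat (S n) - Z.of_nat p)))).
  { intros n.
    apply (is_series_lincomb _ _ _ _ _ (jweight (Z.of_nat n)) (jweight (- Z.of_nat (S n))) _
             (Hg (t (Z.of_nat n - Z.of_nat p))) (Hg (t (- Z.of_nat (S n) - Z.of_nat p))));
      [| reflexivity].
    intros j. unfold a, w, moment_term. rewrite !t_sub_nat_pow. unfold X. ring. }
  assert (Hcol : forall j, is_series (fun n => Rabs (b j) * X ^ (p * j) * w j n)
                             (Rabs (b j) * X ^ (p * j) * moment j)).
  { intros j. apply (is_series_lincomb _ _ _ _ _ (Rabs (b j) * X ^ (p * j)) 0 _
                       (is_zseries_moment j) (is_zseries_moment j)); [intros n; unfold w |]; ring. }
  assert (HX : forall j, 0 <= X ^ (p * j)).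
  { intros j. apply pow_le. unfold X. apply pow_le. left. apply Rinv_0_lt_compat. lra. }
  assert (Had : forall n j, Rabs (a n j) <= Rabs (b j) * X ^ (p * j) * w j n).
  { intros n j. unfold a. rewrite !Rabs_mult, (Rabs_pos_eq (X ^ _)), (Rabs_pos_eq (w j n));
      [lra | | apply HX].
    unfold w. pose proof (moment_term_pos j (Z.of_nat n)).
    pose proof (moment_term_pos j (- Z.of_nat (S n))). lra. }
  pose proof (is_series_Series_swap a _ _ _ Hrow Had Hcol (ex_series_coef_moment_nodes p)) as Hswap.
  assert (E : Series (fun j => Series (fun n => a n j)) = 0).
  { rewrite <- (is_series_unique _ _ Hswap). apply is_series_unique, (jackson_shift_vanish p). }
  assert (Ecol : forall j, Series (fun n => a n j) = b j * moment j * X ^ (p * j)).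
  { intros j. unfold a. rewrite Series_scal_l. unfold moment. fold (w j). ring. }
  rewrite (Series_ext _ _ Ecol) in E. rewrite <- E. apply Series_correct.
  apply (ex_series_Rabs_le _ (fun j => Rabs (b j) * X ^ (p * j) * moment j));
    [intros j | apply ex_series_coef_moment_nodes].
  rewrite !Rabs_mult, (Rabs_pos_eq (moment j)), (Rabs_pos_eq (X ^ _));
    [lra | apply HX | apply Rlt_le, moment_pos].
Qed.

Theorem coef_eq0_of_jackson_moments_vanish (j : nat) : b j = 0.
Proof.
  assert (Hbm : b j * moment j = 0).
  { apply (coef_eq0_of_vanishing_at_nodes q Hq (B * moment 0) (fun j => b j * moment j)).
    - intros i. rewrite Rabs_mult, (Rabs_pos_eq (moment i)) by apply Rlt_le, moment_pos.
      apply coef_moment_le.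
    - exact coef_moment_series_vanish. }
  pose proof (moment_pos j). apply Rmult_integral in Hbm as [-> | Hm]; [reflexivity | lra].
Qed.

End Uniqueness.

End JacksonMoments.

(** * Functions of [M_s] on the real axis *)

Lemma is_lim_seq_Re (u : nat -> C) (l : C) :
  filterlim u eventually (locally l) -> is_lim_seq (fun n => Re (u n)) (Re l).
Proof.
  intros H. apply is_lim_seq_spec. intros eps.
  apply (H (fun z => Rabs (Re z - Re l) < eps)). exists eps. intros z [Hz _]. exact Hz.
Qed.

Lemma is_lim_seq_Im (u : nat -> C) (l : C) :
  filterlim u eventually (locally l) -> is_lim_seq (fun n => Im (u n)) (Im l).
Proof.
  intros H. apply is_lim_seq_spec. intros eps.
  apply (H (fun z => Rabs (Im z - Im l) < eps)). exists eps. intros z [_ Hz]. exact Hz.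
Qed.

Lemma is_series_Re (u : nat -> C) (l : C) :
  is_series u l -> is_series (fun n => Re (u n)) (Re l).
Proof.
  intros H. apply is_series_is_lim_seq.
  apply (is_lim_seq_ext (fun N => Re (sum_n u N))); [| exact (is_lim_seq_Re _ _ H)].
  intros N. induction N as [| N IH]; rewrite !sum_O || rewrite !sum_Sn, <- IH; reflexivity.
Qed.

Lemma is_series_even_terms (u : nat -> R) (l : R) :
  (forall j, u (2 * j + 1)%nat = 0) -> is_series u l -> is_series (fun j => u (2 * j)%nat) l.
Proof.
  intros Hodd Hs. apply is_series_is_lim_seq.
  apply (is_lim_seq_ext (fun N => sum_n u (2 * N + 1))).
  - intros N. induction N as [| N IH].
    + change (2 * 0 + 1)%nat with 1%nat. rewrite sum_Sn, !sum_O.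
      pose proof (Hodd 0%nat) as H1. simpl in H1. rewrite H1. unfold plus; simpl; ring.
    + replace (2 * S N + 1)%nat with (S (S (2 * N + 1))) by lia.
      rewrite !sum_Sn, IH. replace (S (S (2 * N + 1))) with (2 * S N + 1)%nat by lia.
      rewrite Hodd. replace (S (2 * N + 1)) with (2 * S N)%nat by lia.
      unfold plus; simpl; ring.
  - apply is_series_is_lim_seq, (proj2 (is_lim_seq_spec _ _)) in Hs. apply is_lim_seq_spec.
    intros eps. destruct (Hs eps) as [N0 HN0]. exists N0. intros N HN. apply HN0. lia.
Qed.

Lemma cpow_RtoC (u : R) (n : nat) : cpow (RtoC u) n = RtoC (u ^ n).
Proof.
  induction n as [| n IH]; [reflexivity |]. simpl cpow. rewrite IH, <- RtoC_mult. reflexivity.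
Qed.

Lemma cpow_opp_even (z : C) (j : nat) : cpow (Copp z) (2 * j) = cpow z (2 * j).
Proof.
  induction j as [| j IH]; [reflexivity |].
  replace (2 * S j)%nat with (S (S (2 * j))) by lia. cbn [cpow]. rewrite IH. ring.
Qed.

Lemma cpow_opp_odd (z : C) (j : nat) : cpow (Copp z) (2 * j + 1) = Copp (cpow z (2 * j + 1)).
Proof. rewrite Nat.add_1_r. cbn [cpow]. rewrite cpow_opp_even. ring. Qed.

Lemma pow_opp_even (u : R) (j : nat) : (- u) ^ (2 * j) = u ^ (2 * j).
Proof. rewrite !pow_mult. f_equal. ring. Qed.

Lemma qpoch_partial_neg_sq (q u : R) (n : nat) :
  qpoch_partial (Copp (cpow (RtoC u) 2)) (q ^ 2) n = RtoC (qpoch_sq q u n).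
Proof.
  induction n as [| n IH]; [reflexivity |].
  cbn [qpoch_partial qpoch_sq]. rewrite IH, cpow_RtoC.
  apply injective_projections; simpl; ring.
Qed.

Lemma qpoch_sq_opp (q u : R) (n : nat) : qpoch_sq q (- u) n = qpoch_sq q u n.
Proof. induction n as [| n IH]; [reflexivity |]. cbn [qpoch_sq]. rewrite IH. f_equal. ring. Qed.

Section MembershipInM.

Variables (q s gamma : R) (F : C -> C) (a : nat -> C) (Cst : R).
Hypothesis Hq : 0 < q < 1.
Hypothesis Hs : 0 < s < 1.
Hypothesis Hgamma : 0 < gamma.
Hypothesis Hbd : forall l : nat, Cmod (a l) <= Cst * s ^ l * Rpower q (INR l ^ 2 / 2).
Hypothesis Hrep : forall x : C, Rabs (Im x) < 1 ->
  exists fx ex : C,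
    is_series (fun l => Cmult (a l) (cpow x l)) fx /\
    is_eq (q ^ 2) (Copp (cpow x 2)) ex /\
    F x = Cmult fx ex.
Hypothesis HJ : forall k : nat,
  jackson_integral_is q gamma
    (fun x : R => Cmult (F (RtoC x)) (cpow (RtoC x) (2 * k)%nat)) (RtoC 0).

Let P (u : R) : R := real (Lim_seq (qpoch_sq q u)).

Lemma Rabs_Im_RtoC_lt1 (u : R) : Rabs (Im (RtoC u)) < 1.
Proof. simpl. rewrite Rabs_R0. lra. Qed.

Lemma lim_qpoch_partial_neg_sq (u : R) (p : C) :
  filterlim (qpoch_partial (Copp (cpow (RtoC u) 2)) (q ^ 2)) eventually (locally p) ->
  is_lim_seq (qpoch_sq q u) (P u) /\ p = RtoC (P u).
Proof.
  intros Hp.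
  assert (HRe : is_lim_seq (qpoch_sq q u) (Re p)).
  { exact (is_lim_seq_ext _ _ _ (fun n => f_equal Re (qpoch_partial_neg_sq q u n))
             (is_lim_seq_Re _ _ Hp)). }
  assert (HIm : is_lim_seq (fun _ => 0) (Im p)).
  { exact (is_lim_seq_ext _ _ _ (fun n => f_equal Im (qpoch_partial_neg_sq q u n))
             (is_lim_seq_Im _ _ Hp)). }
  assert (EP : P u = Re p) by (unfold P; rewrite (is_lim_seq_unique _ _ HRe); reflexivity).
  apply is_lim_seq_unique in HIm. rewrite Lim_seq_const in HIm. injection HIm as HIm.
  rewrite EP. split; [exact HRe | apply injective_projections; simpl; auto].
Qed.

Lemma is_lim_qpoch_sq (u : R) : is_lim_seq (qpoch_sq q u) (P u).
Proof.
  destruct (Hrep (RtoC u) (Rabs_Im_RtoC_lt1 u)) as (fx & ex & _ & (p & Hp & _) & _).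
  exact (proj1 (lim_qpoch_partial_neg_sq u p Hp)).
Qed.

Lemma F_of_real (u : R) :
  exists fx, is_series (fun l => Cmult (a l) (cpow (RtoC u) l)) fx /\
             F (RtoC u) = Cmult fx (RtoC (/ P u)).
Proof.
  destruct (Hrep (RtoC u) (Rabs_Im_RtoC_lt1 u)) as (fx & ex & Hfx & (p & Hp & ->) & HF).
  exists fx. split; [exact Hfx |]. rewrite HF, (proj2 (lim_qpoch_partial_neg_sq u p Hp)).
  pose proof (qpoch_lim_ge1 q P is_lim_qpoch_sq u). rewrite RtoC_inv by lra. reflexivity.
Qed.

Lemma P_opp (u : R) : P (- u) = P u.
Proof. unfold P. f_equal. apply Lim_seq_ext. intros n. apply qpoch_sq_opp. Qed.

Variable c : C.
Hypothesis Hc : Cmod c <= 1.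

Definition even_coef (j : nat) : R := 2 * Re (Cmult c (a (2 * j)%nat)).

Lemma is_series_even_part (u : R) (fx fx' : C) :
  is_series (fun l => Cmult (a l) (cpow (RtoC u) l)) fx ->
  is_series (fun l => Cmult (a l) (cpow (RtoC (- u)) l)) fx' ->
  is_series (fun j => even_coef j * u ^ (2 * j)) (Re (Cmult c (Cplus fx fx'))).
Proof.
  intros H1 H2.
  pose proof (is_series_Re _ _ (is_series_scal c _ _ (is_series_plus _ _ _ _ H1 H2))) as H.
  set (v := fun l => Re (Cmult c (a l)) * (u ^ l + (- u) ^ l)).
  assert (Ev : forall l, Re (Cmult c (Cplus (Cmult (a l) (cpow (RtoC u) l))
                                           (Cmult (a l) (cpow (RtoC (- u)) l)))) = v l).
  { intros l. unfold v. rewrite !cpow_RtoC. destruct c, (a l). simpl. ring. }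
  apply (is_series_ext_R (fun j => v (2 * j)%nat)).
  - intros j. unfold v, even_coef. rewrite pow_opp_even. ring.
  - apply is_series_even_terms.
    + intros j. unfold v. rewrite !pow_add, pow_opp_even. ring.
    + refine (is_series_ext_R _ _ _ (fun l => Ev l) H).
Qed.

Let g (u : R) : R := Series (fun j => even_coef j * u ^ (2 * j)).

Lemma g_eq_Re_even_part (u : R) (fx fx' : C) :
  is_series (fun l => Cmult (a l) (cpow (RtoC u) l)) fx ->
  is_series (fun l => Cmult (a l) (cpow (RtoC (- u)) l)) fx' ->
  g u = Re (Cmult c (Cplus fx fx')).
Proof. intros H1 H2. apply is_series_unique, is_series_even_part; assumption. Qed.

Lemma is_series_g (u : R) : is_series (fun j => even_coef j * u ^ (2 * j)) (g u).
Proof.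
  destruct (F_of_real u) as [fx [H1 _]], (F_of_real (- u)) as [fx' [H2 _]].
  rewrite (g_eq_Re_even_part u fx fx' H1 H2). apply is_series_even_part; assumption.
Qed.

Lemma Re_jterm (k : nat) (m : Z) :
  Re (Cmult c (jterm q gamma (fun x : R => Cmult (F (RtoC x)) (cpow (RtoC x) (2 * k))) m)) =
  (1 - q) * (jweight q gamma P m * g (jpt q gamma m) * jpt q gamma m ^ (2 * k)).
Proof.
  unfold jterm, jweight. set (u := jpt q gamma m).
  destruct (F_of_real u) as [fx [H1 HF1]], (F_of_real (- u)) as [fx' [H2 HF2]].
  rewrite (g_eq_Re_even_part u fx fx' H1 H2), HF1, HF2, P_opp, !cpow_RtoC, pow_opp_even.
  destruct c, fx, fx'. simpl. unfold Rdiv. ring.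
Qed.

Lemma jackson_moments_vanish (k : nat) :
  is_zseries (fun m => jweight q gamma P m * g (jpt q gamma m) * jpt q gamma m ^ (2 * k)) 0.
Proof.
  destruct (HJ k) as [_ Hser].
  pose proof (is_series_Re _ _ (is_series_scal c _ _ Hser)) as H.
  apply (is_series_lincomb _ _ _ _ _ (/ (1 - q)) 0 _ H H).
  - intros n. cbv beta. change (scal c ?z) with (Cmult c z).
    rewrite Cmult_plus_distr_l. change (Re (Cplus ?x ?y)) with (Re x + Re y).
    rewrite !Re_jterm. field. lra.
  - change (scal c (RtoC 0)) with (Cmult c (RtoC 0)). rewrite Cmult_0_r. simpl. ring.
Qed.

Lemma Rabs_jackson_term_le (k : nat) (m : Z) :
  let h x := Cmult (F (RtoC x)) (cpow (RtoC x) (2 * k)) in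
  Rabs (jweight q gamma P m * g (jpt q gamma m) * jpt q gamma m ^ (2 * k)) <=
  jpt q gamma m * Cmod (h (1 * jpt q gamma m)) + jpt q gamma m * Cmod (h (-1 * jpt q gamma m)).
Proof.
  intros h. set (u := jpt q gamma m).
  assert (Hu : 0 < u) by (apply jpt_pos; lra).
  rewrite Rmult_1_l. replace (-1 * u) with (- u) by ring.
  apply (Rmult_le_reg_l (1 - q)); [lra |].
  rewrite <- (Rabs_pos_eq (1 - q)) at 1 by lra. rewrite <- Rabs_mult, <- Re_jterm.
  eapply Rle_trans; [apply re_le_Cmod |]. unfold jterm. fold u (h u) (h (- u)).
  rewrite !Cmod_mult, Cmod_R, Rabs_pos_eq by (apply Rmult_le_pos; lra).
  pose proof (Cmod_triangle (h u) (h (- u))).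
  assert (0 <= (1 - q) * u * Cmod (Cplus (h u) (h (- u))))
    by (apply Rmult_le_pos; [apply Rmult_le_pos; lra | apply Cmod_ge_0]).
  apply Rle_trans with ((1 - q) * u * Cmod (Cplus (h u) (h (- u)))); [nra |].
  replace ((1 - q) * (u * Cmod (h u) + u * Cmod (h (- u))))
    with ((1 - q) * u * (Cmod (h u) + Cmod (h (- u)))) by ring.
  apply Rmult_le_compat_l; [apply Rmult_le_pos |]; lra.
Qed.

Lemma jackson_terms_null (k : nat) :
  is_lim_Z0 (fun m => jweight q gamma P m * g (jpt q gamma m) * jpt q gamma m ^ (2 * k)).
Proof.
  destruct (HJ k) as [Habs _].
  destruct (Habs 1 (or_introl eq_refl)) as [Hp1 Hn1], (Habs (-1) (or_intror eq_refl)) as [Hp2 Hn2].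
  apply ex_series_lim_0 in Hp1, Hn1, Hp2, Hn2.
  split.
  - apply (is_lim_seq_Rabs_le_0 _ _ (fun n => Rabs_jackson_term_le k (Z.of_nat n))).
    replace (Finite 0) with (Finite (0 + 0)) by (f_equal; ring). apply is_lim_seq_plus'; assumption.
  - apply is_lim_seq_incr_1.
    apply (is_lim_seq_Rabs_le_0 _ _ (fun n => Rabs_jackson_term_le k (- Z.of_nat (S n)))).
    replace (Finite 0) with (Finite (0 + 0)) by (f_equal; ring). apply is_lim_seq_plus'; assumption.
Qed.

Lemma Rpower_half_sq (j : nat) : Rpower q (INR (2 * j) ^ 2 / 2) = q ^ (2 * j * j).
Proof.
  rewrite <- (Rpower_pow (2 * j * j) q) by lra. f_equal. rewrite !mult_INR. simpl. field.
Qed.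

Lemma Rabs_even_coef_le (j : nat) : Rabs (even_coef j) <= 2 * Cst * q ^ (2 * j * j).
Proof.
  unfold even_coef. rewrite Rabs_mult, (Rabs_pos_eq 2) by lra.
  assert (HCst : 0 <= Cst).
  { pose proof (Hbd (2 * 0)%nat) as H0. rewrite Rpower_half_sq in H0.
    change (2 * 0 * 0)%nat with 0%nat in H0. change (2 * 0)%nat with 0%nat in H0.
    rewrite !pow_O in H0. pose proof (Cmod_ge_0 (a 0%nat)). lra. }
  pose proof (Hbd (2 * j)%nat) as H. rewrite Rpower_half_sq in H.
  pose proof (re_le_Cmod (Cmult c (a (2 * j)%nat))) as H1. rewrite Cmod_mult in H1.
  pose proof (Cmod_ge_0 c). pose proof (Cmod_ge_0 (a (2 * j)%nat)).
  assert (Hsq : 0 <= q ^ (2 * j * j)) by (apply pow_le; lra).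
  assert (Hs1 : s ^ (2 * j) <= 1) by (rewrite <- (pow1 (2 * j)); apply pow_incr; lra).
  assert (Cst * s ^ (2 * j) * q ^ (2 * j * j) <= Cst * q ^ (2 * j * j)).
  { apply Rmult_le_compat_r; [exact Hsq |].
    rewrite <- (Rmult_1_r Cst) at 2. apply Rmult_le_compat_l; lra. }
  nra.
Qed.

Lemma Re_even_coef_eq0 (j : nat) : Re (Cmult c (a (2 * j)%nat)) = 0.
Proof.
  pose proof (coef_eq0_of_jackson_moments_vanish q gamma P Hq Hgamma is_lim_qpoch_sq
                even_coef g (2 * Cst) Rabs_even_coef_le is_series_g
                jackson_moments_vanish jackson_terms_null j) as H.
  unfold even_coef in H. lra.
Qed.

End MembershipInM.

(* [e_{q^2}(-x^2)] is even in [x], so a representation with odd [f] makes [F] odd. *)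
Lemma F_opp_of_odd_series (q : R) (F : C -> C) (a : nat -> C) (x : C) :
  (forall j, a (2 * j)%nat = RtoC 0) ->
  (forall z : C, Rabs (Im z) < 1 ->
     exists fx ex : C,
       is_series (fun l => Cmult (a l) (cpow z l)) fx /\
       is_eq (q ^ 2) (Copp (cpow z 2)) ex /\ F z = Cmult fx ex) ->
  Rabs (Im x) < 1 -> F (Copp x) = Copp (F x).
Proof.
  intros Ha Hrep Hx.
  assert (Hx' : Rabs (Im (Copp x)) < 1) by (destruct x; simpl; rewrite Rabs_Ropp; exact Hx).
  destruct (Hrep x Hx) as (fx & ex & H1 & (p & Hp & ->) & ->).
  destruct (Hrep (Copp x) Hx') as (fx' & ex' & H1' & (p' & Hp' & ->) & ->).
  replace (cpow (Copp x) 2) with (cpow x 2) in Hp' by (simpl; ring).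
  rewrite (filterlim_locally_unique _ _ _ Hp' Hp).
  assert (Hodd : is_series (fun l => Cmult (a l) (cpow (Copp x) l)) (Copp fx)).
  { apply (is_series_ext (fun l => opp (Cmult (a l) (cpow x l)))); [| exact (is_series_opp _ _ H1)].
    intros l. destruct (Nat.Even_or_Odd l) as [[j ->] | [j ->]].
    - rewrite Ha. change (Copp (Cmult 0 (cpow x (2 * j))) = Cmult 0 (cpow (Copp x) (2 * j))). ring.
    - rewrite cpow_opp_odd. change (Copp (Cmult (a (2 * j + 1)%nat) (cpow x (2 * j + 1)))
                               = Cmult (a (2 * j + 1)%nat) (Copp (cpow x (2 * j + 1)))). ring. }
  rewrite (filterlim_locally_unique _ _ _ H1' Hodd). ring.
Qed.

Lemma in_M_even_coef_eq0 (q s gamma : R) (F : C -> C) (a : nat -> C) (Cst : R) :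
  0 < q < 1 -> 0 < s < 1 -> 0 < gamma ->
  (forall l : nat, Cmod (a l) <= Cst * s ^ l * Rpower q (INR l ^ 2 / 2)) ->
  (forall x : C, Rabs (Im x) < 1 ->
     exists fx ex : C,
       is_series (fun l => Cmult (a l) (cpow x l)) fx /\
       is_eq (q ^ 2) (Copp (cpow x 2)) ex /\ F x = Cmult fx ex) ->
  (forall k : nat,
     jackson_integral_is q gamma
       (fun x : R => Cmult (F (RtoC x)) (cpow (RtoC x) (2 * k)%nat)) (RtoC 0)) ->
  forall j, a (2 * j)%nat = RtoC 0.
Proof.
  intros Hq Hs Hg Hbd Hrep HJ j.
  (* Testing against [c = 1] and [c = -i] recovers the real and imaginary parts. *)
  pose proof (Re_even_coef_eq0 q s gamma F a Cst Hq Hs Hg Hbd Hrep HJ (RtoC 1)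
                ltac:(rewrite Cmod_1; lra) j) as Hre.
  pose proof (Re_even_coef_eq0 q s gamma F a Cst Hq Hs Hg Hbd Hrep HJ (0, -1)
                ltac:(unfold Cmod; simpl; replace (0 * (0 * 1) + -1 * (-1 * 1)) with 1 by ring;
                       rewrite sqrt_1; lra) j) as Him.
  destruct (a (2 * j)%nat) as [u v]. simpl in Hre, Him.
  apply injective_projections; simpl; lra.
Qed.

Theorem lemma5p9 (q s gamma : R) (F : C -> C) :
  0 < q < 1 ->
  0 < s < 1 ->
  in_M q s F ->
  (forall x : C, Rabs (Im x) < 1 -> F (Copp x) = F x) ->
  0 < gamma ->
  (forall k : nat,
     jackson_integral_is q gamma
       (fun x : R => Cmult (F (RtoC x)) (cpow (RtoC x) (2 * k))) (RtoC 0)) ->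
  forall x : C, Rabs (Im x) < 1 -> F x = RtoC 0.
Proof.
  intros Hq Hs (a & Cst & _ & Hbd & Hrep) Heven Hg HJ x Hx.
  pose proof (in_M_even_coef_eq0 q s gamma F a Cst Hq Hs Hg Hbd Hrep HJ) as Ha.
  pose proof (F_opp_of_odd_series q F a x Ha Hrep Hx) as Hodd.
  rewrite Heven in Hodd by exact Hx.
  destruct (F x) as [u v]. injection Hodd as Hu Hv. apply injective_projections; simpl; lra.
Qed.
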